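(* Let $(X_f,G)$ be a semicocycle extension of a minimal equicontinuous system $(\mathbb{T},G)$ with $\mathbb{T}$ metrizable. Suppose that $D_f$ is countable, that $G\theta\cap D_f$ is finite for every $\theta\in\mathbb{T}$, and that $G$ acts locally almost freely on every $\theta\in D_f$. Then $(X_f,G)$ is tame.
   Context: Semicocycle setting: $G$ topological group acting jointly continuously, minimally (all orbits dense) and equicontinuously on compact Hausdorff $\mathbb{T}$; $E(\mathbb{T})$ Ellis semigroup (closure of $\{\theta\mapsto g\theta\}$ in $\mathbb{T}^{\mathbb{T}}$). $K$ compact Hausdorff; $f\colon G\theta_0\to K$ continuous with $\overline{G\theta_0}=\mathbb{T}$; $F=\overline{\operatorname{gr}f}\subseteq\mathbb{T}\times K$, $F(\theta)=\{k:(\theta,k)\in F\}$, $D_f=\{\theta:\#F(\theta)>1\}$; $\theta_1\sim\theta_2$ iff $F(\xi\theta_1)=F(\xi\theta_2)$ for all $\xi\in E(\mathbb{T})$; $f$ invariant under no rotation ($\sim$ trivial). $X_f\subseteq K^G$ is the closure of $\{\sigma^h f\}$, $f\equiv(f(g\theta_0))_g$, $\sigma^h((x_g)_g)=(x_{gh})_g$. Local almost freeness: $\operatorname{Stab}_G(\theta)=\{g:g\theta=\theta\}$; $g\overset{\theta}{\sim}g'$ iff $g,g'$ coincide on a neighbourhood of $\theta$; $G$ acts locally almost freely on $\theta$ if $\operatorname{Stab}_G(\theta)/\overset{\theta}{\sim}$ is finite. Tameness: for $A_0,A_1\subseteq X_f$, $J\subseteq G$ is an independence set if for all finite $I\subseteq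 J$ and $a\in\{0,1\}^I$, $\bigcap_{i\in I}\sigma^{i^{-1}}A_{a_i}\neq\emptyset$; $(x_0,x_1)$ is an IT-pair if every pair of neighbourhoods of $x_0,x_1$ has an infinite independence set; the system is tame iff every IT-pair has $x_0=x_1$. *)

From Stdlib Require Import Reals List Classical FunctionalExtensionality.
Import ListNotations.
Open Scope R_scope.

Definition is_topology {T : Type} (op : (T -> Prop) -> Prop) : Prop :=
  op (fun _ => True) /\
  (forall U V, op U -> op V -> op (fun x => U x /\ V x)) /\
  (forall F : (T -> Prop) -> Prop, (forall U, F U -> op U) ->
     op (fun x => exists U, F U /\ U x)).

Definition prod_open {A B : Type} (opA : (A -> Prop) -> Prop) (opB : (B -> Prop) -> Prop)
  (W : A * B -> Prop) : Prop :=
  forall p, W p -> exists U V, opA U /\ opB V /\ U (fst p) /\ V (snd p) /\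
     (forall a b, U a -> V b -> W (a, b)).

(** Product (pointwise convergence) topology on I -> Y, generated by finite cylinders. *)
Definition pi_open {I Y : Type} (opY : (Y -> Prop) -> Prop) (W : (I -> Y) -> Prop) : Prop :=
  forall x, W x -> exists l : list (I * (Y -> Prop)),
     Forall (fun p => opY (snd p) /\ snd p (x (fst p))) l /\
     (forall y, Forall (fun p => snd p (y (fst p))) l -> W y).

Definition closure {T : Type} (op : (T -> Prop) -> Prop) (S : T -> Prop) (x : T) : Prop :=
  forall U, op U -> U x -> exists y, U y /\ S y.

Definition dense {T : Type} (op : (T -> Prop) -> Prop) (S : T -> Prop) : Prop :=
  forall x, closure op S x.

Definition continuous {A B : Type} (opA : (A -> Prop) -> Prop) (opB : (B -> Prop) -> Prop)
  (f : A -> B) : Prop :=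
  forall V, opB V -> opA (fun x => V (f x)).

Definition compact {T : Type} (op : (T -> Prop) -> Prop) : Prop :=
  forall F : (T -> Prop) -> Prop, (forall U, F U -> op U) ->
    (forall x, exists U, F U /\ U x) ->
    exists l : list (T -> Prop), Forall F l /\ (forall x, exists U, In U l /\ U x).

Definition hausdorff {T : Type} (op : (T -> Prop) -> Prop) : Prop :=
  forall x y, x <> y -> exists U V, op U /\ op V /\ U x /\ V y /\
    (forall z, ~ (U z /\ V z)).

Definition metrizable {T : Type} (op : (T -> Prop) -> Prop) : Prop :=
  exists d : T -> T -> R,
    (forall x y, d x y = 0 <-> x = y) /\
    (forall x y, d x y = d y x) /\
    (forall x y z, d x z <= d x y + d y z) /\
    (forall U, op U <-> (forall x, U x -> exists eps, 0 < eps /\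
                             (forall y, d x y < eps -> U y))).

Definition finite_set {T : Type} (P : T -> Prop) : Prop :=
  exists l : list T, forall x, P x -> In x l.

Definition infinite_set {T : Type} (P : T -> Prop) : Prop := ~ finite_set P.

Definition countable_set {T : Type} (P : T -> Prop) : Prop :=
  exists h : T -> nat, forall x y, P x -> P y -> h x = h y -> x = y.

Definition is_group {G : Type} (mul : G -> G -> G) (inv : G -> G) (e : G) : Prop :=
  (forall a b c, mul a (mul b c) = mul (mul a b) c) /\
  (forall a, mul e a = a /\ mul a e = a) /\
  (forall a, mul (inv a) a = e /\ mul a (inv a) = e).

Definition is_topological_group {G : Type} (opG : (G -> Prop) -> Prop)
  (mul : G -> G -> G) (inv : G -> G) (e : G) : Prop :=
  is_topology opG /\ is_group mul inv e /\
  continuous (prod_open opG opG) opG (fun p => mul (fst p) (snd p)) /\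
  continuous opG opG inv.

Definition is_action {G T : Type} (mul : G -> G -> G) (e : G) (act : G -> T -> T) : Prop :=
  (forall th, act e th = th) /\
  (forall g h th, act (mul g h) th = act g (act h th)).

Definition orbit {G T : Type} (act : G -> T -> T) (th : T) (y : T) : Prop :=
  exists g, y = act g th.

Definition minimal_action {G T : Type} (opT : (T -> Prop) -> Prop) (act : G -> T -> T) : Prop :=
  forall th, dense opT (orbit act th).

(** Equicontinuity w.r.t. the unique uniformity of a compact Hausdorff space,
    whose entourages are the neighbourhoods of the diagonal. *)
Definition equicontinuous_action {G T : Type} (opT : (T -> Prop) -> Prop)
  (act : G -> T -> T) : Prop :=
  forall W, prod_open opT opT W -> (forall x, W (x, x)) ->
    exists V, prod_open opT opT V /\ (forall x, V (x, x)) /\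
      (forall g x y, V (x, y) -> W (act g x, act g y)).

(** * Semicocycle data.
    The continuous map f : G th0 -> K is represented as f : G -> K with
    f g = f(g th0), which must be well defined on the orbit. *)

Definition well_defined_on_orbit {G T K : Type} (act : G -> T -> T) (th0 : T) (f : G -> K) : Prop :=
  forall g h, act g th0 = act h th0 -> f g = f h.

Definition continuous_on_orbit {G T K : Type} (opT : (T -> Prop) -> Prop)
  (opK : (K -> Prop) -> Prop) (act : G -> T -> T) (th0 : T) (f : G -> K) : Prop :=
  forall V, opK V -> exists U, opT U /\ (forall h, V (f h) <-> U (act h th0)).

Definition Fgraph {G T K : Type} (opT : (T -> Prop) -> Prop) (opK : (K -> Prop) -> Prop)
  (act : G -> T -> T) (th0 : T) (f : G -> K) (th : T) (k : K) : Prop :=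
  closure (prod_open opT opK) (fun p => exists g, p = (act g th0, f g)) (th, k).

Definition Dset {G T K : Type} (opT : (T -> Prop) -> Prop) (opK : (K -> Prop) -> Prop)
  (act : G -> T -> T) (th0 : T) (f : G -> K) (th : T) : Prop :=
  exists k1 k2, Fgraph opT opK act th0 f th k1 /\ Fgraph opT opK act th0 f th k2 /\ k1 <> k2.

Definition ellis {G T : Type} (opT : (T -> Prop) -> Prop) (act : G -> T -> T) (xi : T -> T) : Prop :=
  closure (pi_open opT) (fun xi' => exists g, xi' = act g) xi.

Definition rot_equiv {G T K : Type} (opT : (T -> Prop) -> Prop) (opK : (K -> Prop) -> Prop)
  (act : G -> T -> T) (th0 : T) (f : G -> K) (th1 th2 : T) : Prop :=
  forall xi, ellis opT act xi -> forall k,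
    Fgraph opT opK act th0 f (xi th1) k <-> Fgraph opT opK act th0 f (xi th2) k.

Definition semicocycle_setting {G T K : Type}
  (opG : (G -> Prop) -> Prop) (mul : G -> G -> G) (inv : G -> G) (e : G)
  (opT : (T -> Prop) -> Prop) (act : G -> T -> T)
  (opK : (K -> Prop) -> Prop) (th0 : T) (f : G -> K) : Prop :=
  is_topological_group opG mul inv e /\
  is_topology opT /\ compact opT /\ hausdorff opT /\
  is_action mul e act /\
  continuous (prod_open opG opT) opT (fun p => act (fst p) (snd p)) /\
  minimal_action opT act /\ equicontinuous_action opT act /\
  is_topology opK /\ compact opK /\ hausdorff opK /\
  well_defined_on_orbit act th0 f /\ continuous_on_orbit opT opK act th0 f /\
  dense opT (orbit act th0) /\
  (forall th1 th2, rot_equiv opT opK act th0 f th1 th2 -> th1 = th2).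

Definition shift {G K : Type} (mul : G -> G -> G) (h : G) (x : G -> K) : G -> K :=
  fun g => x (mul g h).

Definition Xf {G K : Type} (opK : (K -> Prop) -> Prop) (mul : G -> G -> G) (f : G -> K)
  (x : G -> K) : Prop :=
  closure (pi_open opK) (fun y => exists h, y = shift mul h f) x.

Definition indep_set {G K : Type} (mul : G -> G -> G) (inv : G -> G)
  (A0 A1 : (G -> K) -> Prop) (J : G -> Prop) : Prop :=
  forall (I : list G) (a : G -> bool), (forall i, In i I -> J i) ->
    exists y, forall i, In i I ->
      exists x, (if a i then A1 x else A0 x) /\ y = shift mul (inv i) x.

Definition nbhd_in_Xf {G K : Type} (opK : (K -> Prop) -> Prop) (mul : G -> G -> G) (f : G -> K)
  (N : (G -> K) -> Prop) (x : G -> K) : Prop :=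
  (forall y, N y -> Xf opK mul f y) /\
  exists O, pi_open opK O /\ O x /\ (forall y, O y -> Xf opK mul f y -> N y).

Definition IT_pair {G K : Type} (opK : (K -> Prop) -> Prop) (mul : G -> G -> G) (inv : G -> G)
  (f : G -> K) (x0 x1 : G -> K) : Prop :=
  Xf opK mul f x0 /\ Xf opK mul f x1 /\
  forall N0 N1, nbhd_in_Xf opK mul f N0 x0 -> nbhd_in_Xf opK mul f N1 x1 ->
    exists J, infinite_set J /\ indep_set mul inv N0 N1 J.

Definition tame_Xf {G K : Type} (opK : (K -> Prop) -> Prop) (mul : G -> G -> G) (inv : G -> G)
  (f : G -> K) : Prop :=
  forall x0 x1, IT_pair opK mul inv f x0 x1 -> x0 = x1.

Definition locally_almost_free_at {G T : Type} (opT : (T -> Prop) -> Prop)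
  (act : G -> T -> T) (th : T) : Prop :=
  exists l : list G, forall g, act g th = th ->
    exists g', In g' l /\ act g' th = th /\
      exists U, opT U /\ U th /\ forall y, U y -> act g y = act g' y.

(* Suppose [x0 <> x1] is an IT-pair.  They differ at some [g0]; separating [x0 g0] and
   [x1 g0] by disjoint closed sets [C false], [C true] and moving [g0] along an infinite
   independence set yields a sequence [c n] in [G] along which every finite 0/1-pattern of
   membership in [C] is realised by points of [X_f].  Every [y] in [X_f] lies over some [th]
   in [T]: [y g] belongs to the fibre [F (g th)], and [y] is locally determined near [th].
   By equicontinuity (Arzela-Ascoli) a subsequence of [c n] converges pointwise to an
   injective map [xi].  As [D_f] is countable, its orbits meet it finitely, and [G] acts
   locally almost freely on it, a further diagonal subsequence is, for each [th] with
   [xi th] in [D_f], either eventually off [D_f] or eventually made of maps agreeing near [th].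
   Realising the alternating pattern on longer and longer prefixes and taking a cluster point
   [th] of the base points, the fibre [F (c k th)] meets [C (even k)] for every [k].  If
   [xi th] is not in [D_f] its fibre is a point and the closed graph makes it meet both sets;
   otherwise either some [F (c k th)] meets both sets, or local agreement forces equal values
   at consecutive indices.  Either way the disjointness of [C] is contradicted. *)

From Stdlib Require Import Reals List Classical ClassicalEpsilon FunctionalExtensionality FinFun Lia Lra.
Import ListNotations.

Local Open Scope nat_scope.

Definition unbounded (A : nat -> Prop) : Prop := forall M, exists n, M <= n /\ A n.

Lemma unbounded_mono (A B : nat -> Prop) : unbounded A -> (forall n, A n -> B n) -> unbounded B.
Proof. intros HA HAB M. destruct (HA M) as [n [? ?]]; eauto. Qed.

Lemma not_unbounded (A : nat -> Prop) : ~ unbounded A -> exists M, forall n, M <= n -> ~ A n.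
Proof.
  intro HA. apply not_all_ex_not in HA as [M HM]. exists M. intros n Hn An. apply HM. eauto.
Qed.

Lemma unbounded_split (A P : nat -> Prop) : unbounded A ->
  unbounded (fun n => A n /\ P n) \/ unbounded (fun n => A n /\ ~ P n).
Proof.
  intro HA. destruct (classic (unbounded (fun n => A n /\ P n))) as [H|H]; [left; exact H|right].
  destruct (not_unbounded _ H) as [M0 HM0]. intro M.
  destruct (HA (Nat.max M M0)) as [n [Hn An]]. exists n. split; [lia|].
  split; [exact An|]. intro Pn. apply (HM0 n); [lia|auto].
Qed.

Lemma unbounded_pigeonhole {X : Type} (l : list X) (A : nat -> Prop) (R : nat -> X -> Prop) :
  unbounded A -> (forall n, A n -> exists x, In x l /\ R n x) ->
  exists x, In x l /\ unbounded (fun n => A n /\ R n x).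
Proof.
  revert A. induction l as [|x l IH]; intros A HA Hl.
  - destruct (HA 0) as [n [_ An]]. destruct (Hl n An) as [x [[] _]].
  - destruct (unbounded_split A (fun n => R n x) HA) as [Hx|Hx].
    + exists x. split; [left|]; auto.
    + destruct (IH _ Hx) as [y [Hy HRy]].
      { intros n [An nRx]. destruct (Hl n An) as [z [[<-|Hz] Rz]]; [contradiction|eauto]. }
      exists y. split; [right; exact Hy|]. apply (unbounded_mono _ _ HRy). tauto.
Qed.

Definition increasing (a : nat -> nat) : Prop := forall k, a k < a (S k).

Lemma increasing_lt (a : nat -> nat) : increasing a -> forall k k', k < k' -> a k < a k'.
Proof. intros Ha k k' Hk. induction Hk; [apply Ha|]. specialize (Ha m). lia. Qed.

Lemma increasing_ge (a : nat -> nat) : increasing a -> forall k, k <= a k.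
Proof. intros Ha k. induction k; [lia|]. specialize (Ha k). lia. Qed.

Lemma increasing_le_inv (a : nat -> nat) : increasing a -> forall k k', a k <= a k' -> k <= k'.
Proof.
  intros Ha k k' Hle. destruct (Nat.le_gt_cases k k') as [|Hlt]; auto.
  pose proof (increasing_lt a Ha k' k Hlt). lia.
Qed.

Lemma increasing_injective (a : nat -> nat) : increasing a -> Injective a.
Proof.
  intros Ha k k' Heq.
  pose proof (increasing_le_inv a Ha k k'). pose proof (increasing_le_inv a Ha k' k). lia.
Qed.

Lemma increasing_range_unbounded (a : nat -> nat) : increasing a -> unbounded (fun n => exists k, n = a k).
Proof. intros Ha M. exists (a M). split; [apply increasing_ge; auto|eauto]. Qed.

Lemma increasing_choice (B : nat -> nat -> Prop) :
  (forall m M, exists n, M <= n /\ B m n) -> exists a, increasing a /\ forall m, B m (a m).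
Proof.
  intro HB.
  destruct (choice (fun mM n => fst mM <= n /\ B (snd mM) n)) as [h Hh].
  { intros [M m]. exact (HB m M). }
  set (a := fix a m := match m with 0 => h (0, 0) | S m' => h (S (a m'), S m') end).
  exists a. split.
  - intro m. exact (proj1 (Hh (S (a m), S m))).
  - intros [|m]; [exact (proj2 (Hh (0, 0)))|exact (proj2 (Hh (S (a m), S m)))].
Qed.

Lemma unbounded_enum (A : nat -> Prop) : unbounded A -> exists a, increasing a /\ forall k, A (a k).
Proof. intro HA. apply (increasing_choice (fun _ => A)). intros _ M. apply HA. Qed.

Lemma unbounded_diagonal (P : nat -> (nat -> Prop) -> Prop) :
  (forall m A B, P m A -> (forall n, B n -> A n) -> P m B) ->
  (forall m A, unbounded A -> exists B, (forall n, B n -> A n) /\ unbounded B /\ P m B) ->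
  forall A, unbounded A -> exists B, (forall n, B n -> A n) /\ unbounded B /\
    forall m, exists M, P m (fun n => B n /\ M <= n).
Proof.
  intros Pmono Pstep A HA.
  assert (step : forall m (B : {B | unbounded B}), {B' : {B | unbounded B} |
            (forall n, proj1_sig B' n -> proj1_sig B n) /\ P m (proj1_sig B')}).
  { intros m [B HB]. apply constructive_indefinite_description.
    destruct (Pstep m B HB) as [B' [HB'B [HB' PB']]]. now exists (exist _ B' HB'). }
  set (Bs := fix Bs m := match m with 0 => exist _ A HA | S m' => proj1_sig (step m' (Bs m')) end).
  assert (Bs_antitone : forall m k n, m <= k -> proj1_sig (Bs k) n -> proj1_sig (Bs m) n).
  { intros m k n Hk. induction Hk as [|k Hk IH]; auto.
    intro Hn. apply IH. exact (proj1 (proj2_sig (step k (Bs k))) n Hn). }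
  destruct (increasing_choice (fun m n => proj1_sig (Bs (S m)) n)) as [a [Ha Hab]].
  { intro m. exact (proj2_sig (Bs (S m))). }
  exists (fun n => exists k, n = a k). split; [|split].
  - intros n [k ->]. exact (Bs_antitone 0 (S k) _ ltac:(lia) (Hab k)).
  - exact (increasing_range_unbounded a Ha).
  - intro m. exists (a m). apply (Pmono m _ _ (proj2 (proj2_sig (step m (Bs m))))).
    intros n [[k ->] Hk]. apply (Bs_antitone (S m) (S k)); [|exact (Hab k)].
    apply increasing_le_inv in Hk; auto. lia.
Qed.

Lemma injective_pattern {X Y : Type} (s : X -> Y) (a : X -> bool) :
  Injective s -> exists a' : Y -> bool, forall x, a' (s x) = a x.
Proof.
  intro Hs. exists (fun y => if excluded_middle_informative (exists x, s x = y /\ a x = true) then true else false).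
  intro x. destruct excluded_middle_informative as [[x' [Hx' Hax']]|Hn].
  - apply Hs in Hx'. subst. auto.
  - destruct (a x) eqn:Hax; auto. exfalso. eauto.
Qed.

Lemma even_exists_ge (b : bool) (M : nat) : exists k, M <= k /\ Nat.even k = b.
Proof.
  destruct (Bool.bool_dec (Nat.even M) b) as [H|H]; [exists M; split; auto|].
  exists (S M). split; [lia|]. rewrite Nat.even_succ, <- Nat.negb_even. destruct b, (Nat.even M); simpl in *; congruence.
Qed.
Lemma infinite_injective_seq {X : Type} (J : X -> Prop) :
  infinite_set J -> exists j : nat -> X, (forall n, J (j n)) /\ Injective j.
Proof.
  intro HJ.
  assert (fresh : forall l : list X, exists x, J x /\ ~ In x l).
  { intro l. apply NNPP. intro Hn. apply HJ. exists l. intros x Jx. apply NNPP. eauto. }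
  destruct (choice _ fresh) as [h Hh].
  set (prefix := fix prefix n := match n with 0 => [] | S n' => h (prefix n') :: prefix n' end).
  assert (Hin : forall m n, m < n -> In (h (prefix m)) (prefix n)).
  { intros m n Hmn. induction Hmn; simpl; auto. }
  exists (fun n => h (prefix n)). split; [intro n; apply Hh|].
  intros n m Heq. destruct (Nat.lt_total n m) as [H|[H|H]]; auto; exfalso.
  - apply (proj2 (Hh (prefix m))). rewrite <- Heq. auto.
  - apply (proj2 (Hh (prefix n))). rewrite Heq. auto.
Qed.

Definition closed_in {X : Type} (op : (X -> Prop) -> Prop) (C : X -> Prop) : Prop :=
  exists O, op O /\ forall x, O x <-> ~ C x.

Lemma finite_meet {X A : Type} (N : (X -> Prop) -> Prop) (R : A -> (X -> Prop) -> Prop) :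
  N (fun _ => True) -> (forall U V, N U -> N V -> N (fun x => U x /\ V x)) ->
  (forall a U V, (forall x, V x -> U x) -> R a U -> R a V) ->
  forall l, (forall a, In a l -> exists U, N U /\ R a U) -> exists U, N U /\ forall a, In a l -> R a U.
Proof.
  intros Ntrue Nmeet Rmono l. induction l as [|a l IH]; intro Hl.
  - exists (fun _ => True). split; [exact Ntrue|intros _ []].
  - destruct (Hl a (or_introl eq_refl)) as [U [NU RU]].
    destruct IH as [V [NV RV]]; [intros b Hb; apply Hl; right; exact Hb|].
    exists (fun x => U x /\ V x). split; [auto|].
    intros b [<-|Hb]; [apply (Rmono a U)|apply (Rmono b V)]; try tauto; auto.
Qed.

(* Compactness lets a point-dependent local bound, for any notion [N] of "large set"
   closed under finite intersections, be chosen uniformly. *)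
Lemma compact_uniform_meet {T X : Type} (opT : (T -> Prop) -> Prop)
  (N : (X -> Prop) -> Prop) (R : (T -> Prop) -> (X -> Prop) -> Prop) :
  compact opT -> N (fun _ => True) -> (forall U V, N U -> N V -> N (fun x => U x /\ V x)) ->
  (forall W U V, (forall x, V x -> U x) -> R W U -> R W V) ->
  (forall t, exists W U, opT W /\ W t /\ N U /\ R W U) ->
  exists U, N U /\ forall t, exists W, opT W /\ W t /\ R W U.
Proof.
  intros Hc Ntrue Nmeet Rmono Hloc.
  destruct (Hc (fun W => opT W /\ exists U, N U /\ R W U)) as [l [Hl Hcov]].
  - intros W [HW _]. exact HW.
  - intro t. destruct (Hloc t) as [W [U [HW [Wt [NU RU]]]]]. exists W. eauto.
  - rewrite Forall_forall in Hl.
    destruct (finite_meet N R Ntrue Nmeet Rmono l) as [U [NU RU]].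
    + intros W HW. apply Hl, HW.
    + exists U. split; [exact NU|]. intro t. destruct (Hcov t) as [W [HW Wt]].
      exists W. split; [apply Hl, HW|]. auto.
Qed.

Lemma compact_cluster_point {T : Type} (op : (T -> Prop) -> Prop) : compact op ->
  forall (A : nat -> Prop) (x : nat -> T), unbounded A ->
  exists p, forall U, op U -> U p -> unbounded (fun n => A n /\ U (x n)).
Proof.
  intros Hc A x HA. apply NNPP. intro Hn.
  destruct (compact_uniform_meet op (fun V => exists M, forall n, M <= n -> V n)
             (fun W V => forall n, V n -> A n -> ~ W (x n)) Hc) as [V [[M HM] HV]].
  - exists 0. auto.
  - intros U V [M1 H1] [M2 H2]. exists (Nat.max M1 M2). split; [apply H1|apply H2]; lia.
  - intros W U V HVU HU n Vn. apply HU, HVU, Vn.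
  - intro p. apply NNPP. intro Hp. apply Hn. exists p. intros U HU Up. apply NNPP. intro HUn.
    destruct (not_unbounded _ HUn) as [M HM]. apply Hp.
    exists U, (fun n => M <= n). repeat split; auto.
    + exists M. auto.
    + intros n HMn An Ux. apply (HM n HMn). auto.
  - destruct (HA M) as [n [HMn An]]. destruct (HV (x n)) as [W [_ [Wx RW]]].
    exact (RW n (HM n HMn) An Wx).
Qed.

Lemma compact_closed_nbhd {K : Type} (op : (K -> Prop) -> Prop) :
  is_topology op -> compact op -> hausdorff op ->
  forall W k, op W -> W k -> exists V C, op V /\ V k /\ (forall z, V z -> C z) /\
    (forall z, C z -> W z) /\ closed_in op C.
Proof.
  intros [Htrue [Hmeet Hunion]] Hc Hh W k HW Wk.
  destruct (compact_uniform_meet op (fun P => op P /\ P k)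
              (fun U P => (forall z, U z -> W z) \/ (forall z, ~ (P z /\ U z))) Hc)
    as [P [[HP Pk] HPcov]].
  - split; auto.
  - intros U V [HU Uk] [HV Vk]. auto.
  - intros Q U V HVU [HQ|HQ]; [left; exact HQ|right]. intros z [Vz Qz]. apply (HQ z). auto.
  - intro z. destruct (classic (W z)) as [Wz|nWz].
    + exists W, (fun _ => True). auto.
    + assert (Hkz : k <> z) by (intro; subst; auto).
      destruct (Hh k z Hkz) as [P [Q [HP [HQ [Pk [Qz Hd]]]]]].
      exists Q, P. repeat split; auto.
  - set (O := fun z => exists U, (op U /\ forall y, ~ (P y /\ U y)) /\ U z).
    exists P, (fun z => ~ O z). split; [exact HP|]. split; [exact Pk|]. split; [|split].
    + intros z Pz [U [[_ HU] Uz]]. apply (HU z). auto.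
    + intros z nOz. destruct (HPcov z) as [U [HU [Uz [HUW|HUP]]]]; [auto|].
      exfalso. apply nOz. exists U. auto.
    + exists O. split; [apply Hunion; intros U [HU _]; exact HU|].
      intro z. split; [tauto|apply NNPP].
Qed.

Lemma separate_closed_nbhds {K : Type} (op : (K -> Prop) -> Prop) :
  is_topology op -> compact op -> hausdorff op -> forall k0 k1, k0 <> k1 ->
  exists V C : bool -> K -> Prop, (forall b, op (V b) /\ closed_in op (C b) /\ forall z, V b z -> C b z) /\
    V false k0 /\ V true k1 /\ (forall z, C false z -> C true z -> False).
Proof.
  intros HT Hc Hh k0 k1 Hne. destruct (Hh k0 k1 Hne) as [W0 [W1 [HW0 [HW1 [W0k [W1k Hd]]]]]].
  destruct (compact_closed_nbhd op HT Hc Hh W0 k0 HW0 W0k) as [V0 [C0 [HV0 [V0k [HVC0 [HCW0 HC0]]]]]].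
  destruct (compact_closed_nbhd op HT Hc Hh W1 k1 HW1 W1k) as [V1 [C1 [HV1 [V1k [HVC1 [HCW1 HC1]]]]]].
  exists (fun b : bool => if b then V1 else V0), (fun b : bool => if b then C1 else C0).
  split; [intros []; auto|]. repeat split; auto.
  intros z C0z C1z. apply (Hd z). auto.
Qed.

(* Closedness of the projection [T * K -> T] along the compact factor [K]. *)
Lemma closure_fiber_limit {T K : Type} (opT : (T -> Prop) -> Prop) (opK : (K -> Prop) -> Prop)
  (Z : T * K -> Prop) : is_topology opT -> compact opK ->
  forall C, closed_in opK C -> forall p,
  (forall A, opT A -> A p -> exists q w, A q /\ closure (prod_open opT opK) Z (q, w) /\ C w) ->
  exists v, C v /\ closure (prod_open opT opK) Z (p, v).
Proof.
  intros [Htrue [Hmeet _]] Hc C [O [HO HOC]] p Hnear. apply NNPP. intro Hn.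
  destruct (compact_uniform_meet opK (fun A => opT A /\ A p)
     (fun B A => forall q w, A q -> B w -> closure (prod_open opT opK) Z (q, w) -> C w -> False) Hc)
    as [A [[HA Ap] HAcov]].
  - auto.
  - intros U V [HU Up] [HV Vp]. auto.
  - intros B U V HVU HU q w Vq. apply HU, HVU, Vq.
  - intro v. destruct (classic (C v)) as [Cv|nCv].
    + assert (Hnv : ~ closure (prod_open opT opK) Z (p, v)) by (intro; apply Hn; eauto).
      apply not_all_ex_not in Hnv as [W HW].
      apply imply_to_and in HW as [HWo HW]. apply imply_to_and in HW as [HWpv HW].
      destruct (HWo _ HWpv) as [A [B [HA [HB [Ap [Bv Hrect]]]]]].
      exists B, A. split; [exact HB|]. split; [exact Bv|]. split; [split; [exact HA|exact Ap]|].
      intros q w Aq Bw Hcl _. destruct (Hcl W HWo (Hrect q w Aq Bw)) as [z [Wz Zz]]. eauto.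
    + exists O, (fun _ => True). split; [exact HO|]. split; [apply HOC, nCv|]. split; [auto|].
      intros q w _ Ow _ Cw. apply HOC in Ow. auto.
  - destruct (Hnear A HA Ap) as [q [w [Aq [Hcl Cw]]]].
    destruct (HAcov w) as [B [_ [Bw RB]]]. exact (RB q w Aq Bw Hcl Cw).
Qed.

Local Open Scope R_scope.

Lemma inv_succ_lt (eps : R) : 0 < eps -> exists N, forall k, (N <= k)%nat -> / INR (S k) < eps.
Proof.
  intro He. destruct (archimed_cor1 eps He) as [N [HN HN0]]. exists N. intros k Hk.
  apply Rle_lt_trans with (/ INR N); auto.
  apply Rinv_le_contravar; [apply lt_0_INR; lia|apply le_INR; lia].
Qed.

Lemma inv_succ_pos (k : nat) : 0 < / INR (S k).
Proof. apply Rinv_0_lt_compat, lt_0_INR. lia. Qed.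

Definition is_metric_for {T : Type} (opT : (T -> Prop) -> Prop) (d : T -> T -> R) : Prop :=
  (forall x y, d x y = 0 <-> x = y) /\
  (forall x y, d x y = d y x) /\
  (forall x y z, d x z <= d x y + d y z) /\
  (forall U, opT U <-> (forall x, U x -> exists eps, 0 < eps /\ (forall y, d x y < eps -> U y))).

Definition converges_along {T : Type} (d : T -> T -> R) (A : nat -> Prop) (x : nat -> T) (p : T) : Prop :=
  forall eps, 0 < eps -> exists M, forall n, A n -> (M <= n)%nat -> d (x n) p < eps.

Lemma converges_along_mono {T : Type} (d : T -> T -> R) (A B : nat -> Prop) x p :
  converges_along d A x p -> (forall n, B n -> A n) -> converges_along d B x p.
Proof. intros H HBA eps He. destruct (H eps He) as [M HM]. exists M. auto. Qed.

Lemma converges_along_tail {T : Type} (d : T -> T -> R) (A : nat -> Prop) M x p :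
  converges_along d (fun n => A n /\ (M <= n)%nat) x p -> converges_along d A x p.
Proof.
  intros H eps He. destruct (H eps He) as [M' HM']. exists (Nat.max M M').
  intros n An Hn. apply HM'; [split|]; auto; lia.
Qed.

Lemma converges_along_reindex {T : Type} (d : T -> T -> R) (A : nat -> Prop) (s : nat -> nat) x p :
  increasing s -> (forall k, A (s k)) ->
  converges_along d A x p -> converges_along d (fun _ => True) (fun k => x (s k)) p.
Proof.
  intros Hs HsA H eps He. destruct (H eps He) as [M HM]. exists M. intros k _ Hk.
  apply HM; [apply HsA|]. pose proof (increasing_ge s Hs k). lia.
Qed.

Section Metric.

Context {T : Type} (opT : (T -> Prop) -> Prop) (d : T -> T -> R).
Hypothesis Hd : is_metric_for opT d.

Lemma dist_refl x : d x x = 0.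
Proof. apply (proj1 Hd). reflexivity. Qed.

Lemma dist_sym x y : d x y = d y x.
Proof. apply (proj1 (proj2 Hd)). Qed.

Lemma dist_triangle x y z : d x z <= d x y + d y z.
Proof. apply (proj1 (proj2 (proj2 Hd))). Qed.

Lemma dist_nonneg x y : 0 <= d x y.
Proof. pose proof (dist_triangle x y x). rewrite dist_refl, (dist_sym y x) in H. lra. Qed.

Lemma open_ball U x : opT U -> U x -> exists eps, 0 < eps /\ forall y, d x y < eps -> U y.
Proof. intros HU Ux. apply (proj2 (proj2 (proj2 Hd))); auto. Qed.

Lemma open_of_local (S : T -> Prop) :
  (forall x, S x -> exists U, opT U /\ U x /\ forall z, U z -> S z) -> opT S.
Proof.
  intro Hloc. apply (proj2 (proj2 (proj2 Hd))). intros x Sx.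
  destruct (Hloc x Sx) as [U [HU [Ux HUS]]]. destruct (open_ball U x HU Ux) as [eps [He Hb]]. eauto.
Qed.

Lemma ball_open x r : opT (fun y => d x y < r).
Proof.
  apply (proj2 (proj2 (proj2 Hd))). intros y Hy. exists (r - d x y). split; [lra|].
  intros z Hz. pose proof (dist_triangle x y z). lra.
Qed.

Lemma converges_along_open A x p U : converges_along d A x p -> opT U -> U p ->
  exists M, forall n, A n -> (M <= n)%nat -> U (x n).
Proof.
  intros Hc HU Up. destruct (open_ball U p HU Up) as [eps [He Hb]]. destruct (Hc eps He) as [M HM].
  exists M. intros n An Hn. apply Hb. rewrite dist_sym. auto.
Qed.

Hypothesis HcT : compact opT.

Lemma compact_converging_subset (A : nat -> Prop) (x : nat -> T) : unbounded A ->
  exists B, (forall n, B n -> A n) /\ unbounded B /\ exists p, converges_along d B x p.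
Proof.
  intro HA. destruct (compact_cluster_point opT HcT A x HA) as [p Hp].
  destruct (increasing_choice (fun k n => A n /\ d p (x n) < / INR (S k))) as [a [Ha Hax]].
  { intros k M. destruct (Hp _ (ball_open p (/ INR (S k)))) with M as [n [Hn [An Hpn]]];
      [rewrite dist_refl; apply inv_succ_pos|eauto]. }
  exists (fun n => exists k, n = a k). split; [|split].
  - intros n [k ->]. apply Hax.
  - exact (increasing_range_unbounded a Ha).
  - exists p. intros eps He. destruct (inv_succ_lt eps He) as [K HK]. exists (a K).
    intros n [k ->] Hk. apply increasing_le_inv in Hk; auto.
    rewrite dist_sym. apply Rlt_trans with (/ INR (S k)); [apply Hax|apply HK; auto].
Qed.

Lemma compact_converging_subset_list {Y : Type} (xs : Y -> nat -> T) (l : list Y) (A : nat -> Prop) :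
  unbounded A -> exists B, (forall n, B n -> A n) /\ unbounded B /\
    forall q, In q l -> exists p, converges_along d B (xs q) p.
Proof.
  revert A. induction l as [|q l IH]; intros A HA.
  - exists A. split; [auto|]. split; [exact HA|intros _ []].
  - destruct (IH A HA) as [B1 [HB1A [HB1 Hl]]].
    destruct (compact_converging_subset B1 (xs q) HB1) as [B2 [HB2B1 [HB2 [p Hp]]]].
    exists B2. split; [auto|]. split; [exact HB2|].
    intros q' [<-|Hq']; [eauto|]. destruct (Hl q' Hq') as [p' Hp'].
    exists p'. exact (converges_along_mono d _ _ _ _ Hp' HB2B1).
Qed.

Lemma compact_net r : 0 < r -> exists l, forall x, exists q, In q l /\ d x q < r.
Proof.
  intro Hr.
  destruct (HcT (fun U => exists q, forall y, U y <-> d q y < r)) as [l [Hl Hcov]].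
  - intros U [q Hq]. apply open_of_local. intros x Ux. exists (fun y => d q y < r).
    split; [apply ball_open|]. split; [apply Hq, Ux|intros z Hz; apply Hq, Hz].
  - intro x. exists (fun y => d x y < r). split; [exists x; tauto|]. rewrite dist_refl. exact Hr.
  - assert (Hcenters : exists qs, forall U, In U l -> exists q, In q qs /\ forall y, U y <-> d q y < r).
    { clear Hcov. induction l as [|U l IH].
      - exists []. intros _ [].
      - apply Forall_cons_iff in Hl as [[q Hq] Hl]. destruct (IH Hl) as [qs Hqs].
        exists (q :: qs). intros V [<-|HV]; [exists q; split; [left|]; auto|].
        destruct (Hqs V HV) as [q' [Hq' Hq'V]]. exists q'. split; [right|]; auto. }
    destruct Hcenters as [qs Hqs]. exists qs. intro x.
    destruct (Hcov x) as [U [HU Ux]]. destruct (Hqs U HU) as [q [Hq HqU]].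
    exists q. split; [exact Hq|]. rewrite dist_sym. apply HqU, Ux.
Qed.

Lemma compact_cauchy_converges (A : nat -> Prop) (x : nat -> T) : unbounded A ->
  (forall eps, 0 < eps -> exists M, forall n n', A n -> A n' -> (M <= n)%nat -> (M <= n')%nat ->
     d (x n) (x n') < eps) ->
  exists p, converges_along d A x p.
Proof.
  intros HA Hcauchy. destruct (compact_cluster_point opT HcT A x HA) as [p Hp].
  exists p. intros eps He. destruct (Hcauchy (eps / 2)) as [M HM]; [lra|]. exists M. intros n An Hn.
  destruct (Hp _ (ball_open p (eps / 2))) with M as [n' [Hn' [An' Hpn']]]; [rewrite dist_refl; lra|].
  pose proof (HM n n' An An' Hn Hn'). pose proof (dist_triangle (x n) (x n') p).
  rewrite (dist_sym (x n') p) in H0. lra.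
Qed.

End Metric.

Section Action.

Context {G T : Type} (mul : G -> G -> G) (inv : G -> G) (e : G) (act : G -> T -> T).
Hypotheses (Hg : is_group mul inv e) (Ha : is_action mul e act).

Lemma act_inv_l g x : act (inv g) (act g x) = x.
Proof.
  destruct Hg as [_ [_ Hinv]]. rewrite <- (proj2 Ha), (proj1 (Hinv g)). apply (proj1 Ha).
Qed.

Lemma act_through a b x : act a x = act (mul a (inv b)) (act b x).
Proof.
  destruct Hg as [Hassoc [Hid Hinv]].
  rewrite <- (proj2 Ha), <- Hassoc, (proj1 (Hinv b)), (proj2 (Hid a)). reflexivity.
Qed.

Context (opG : (G -> Prop) -> Prop) (opT : (T -> Prop) -> Prop) (d : T -> T -> R).
Hypotheses (Hd : is_metric_for opT d) (HcT : compact opT)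
  (Hjc : continuous (prod_open opG opT) opT (fun p => act (fst p) (snd p)))
  (Heq : equicontinuous_action opT act).

Lemma act_open_preimage g V : opT V -> opT (fun x => V (act g x)).
Proof.
  intro HV. apply (open_of_local opT d Hd). intros x Vx.
  destruct (Hjc V HV (g, x) Vx) as [U1 [U2 [_ [HU2 [U1g [U2x Hrect]]]]]].
  exists U2. split; [exact HU2|]. split; [exact U2x|]. intros z U2z. exact (Hrect g z U1g U2z).
Qed.

Lemma equicontinuous_uniform x eps : 0 < eps ->
  exists del, 0 < del /\ forall y g, d x y < del -> d (act g x) (act g y) < eps.
Proof.
  intro He.
  destruct (Heq (fun p => d (fst p) (snd p) < eps)) as [V [HV [Vdiag HVact]]].
  - intros [a b] Hab. simpl in Hab. set (r := (eps - d a b) / 2).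
    exists (fun y => d a y < r), (fun y => d b y < r).
    split; [apply ball_open; auto|]. split; [apply ball_open; auto|].
    simpl. rewrite !(dist_refl opT d Hd). split; [unfold r; lra|]. split; [unfold r; lra|].
    intros a' b' Ha' Hb'. simpl.
    pose proof (dist_triangle opT d Hd a' a b'). pose proof (dist_triangle opT d Hd a b b').
    rewrite (dist_sym opT d Hd a' a) in H. unfold r in *. lra.
  - intro z. simpl. rewrite (dist_refl opT d Hd). exact He.
  - destruct (HV (x, x) (Vdiag x)) as [U1 [U2 [HU1 [HU2 [U1x [U2x Hrect]]]]]].
    destruct (open_ball opT d Hd U1 x HU1 U1x) as [e1 [He1 Hb1]].
    destruct (open_ball opT d Hd U2 x HU2 U2x) as [e2 [He2 Hb2]].
    exists (Rmin e1 e2). split; [apply Rmin_glb_lt; auto|]. intros y g Hy.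
    apply (HVact g x y), Hrect.
    + apply Hb1. rewrite (dist_refl opT d Hd). exact He1.
    + apply Hb2. pose proof (Rmin_r e1 e2). lra.
Qed.

(* Arzela-Ascoli for the equicontinuous family [act (c n)]: converge on a finite
   [1/(m+1)]-net for every [m] (diagonally), then equicontinuity gives Cauchy sequences. *)
Lemma pointwise_convergent_subset (c : nat -> G) (A : nat -> Prop) : unbounded A ->
  exists B xi, (forall n, B n -> A n) /\ unbounded B /\
    forall th, converges_along d B (fun n => act (c n) th) (xi th).
Proof.
  intro HA.
  destruct (choice (fun m l => forall th, exists q, In q l /\ d th q < / INR (S m))) as [net Hnet].
  { intro m. apply (compact_net opT d Hd HcT), inv_succ_pos. }
  destruct (unbounded_diagonal (fun m B => forall q, In q (net m) ->
              exists p, converges_along d B (fun n => act (c n) q) p) ) with A as [B [HBA [HB HBnet]]];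
    [| |exact HA|].
  - intros m B B' HB HB'B q Hq. destruct (HB q Hq) as [p Hp].
    exists p. exact (converges_along_mono d _ _ _ _ Hp HB'B).
  - intros m B HB. exact (compact_converging_subset_list opT d Hd HcT (fun q n => act (c n) q) (net m) B HB).
  - assert (Hlim : forall th, exists p, converges_along d B (fun n => act (c n) th) p).
    { intro th. apply (compact_cauchy_converges opT d Hd HcT); [exact HB|]. intros eps He.
      destruct (equicontinuous_uniform th (eps / 3)) as [del [Hdel Hequi]]; [lra|].
      destruct (inv_succ_lt del Hdel) as [m Hm]. destruct (Hnet m th) as [q [Hq Hthq]].
      destruct (HBnet m) as [M HM]. destruct (HM q Hq) as [p Hp]. apply converges_along_tail in Hp.
      destruct (Hp (eps / 6)) as [M' HM']; [lra|]. exists M'. intros n n' Bn Bn' Hn Hn'.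
      assert (Hclose : d th q < del) by (apply Rlt_trans with (/ INR (S m)); auto).
      pose proof (Hequi q (c n) Hclose). pose proof (Hequi q (c n') Hclose).
      pose proof (HM' n Bn Hn). pose proof (HM' n' Bn' Hn').
      pose proof (dist_triangle opT d Hd (act (c n) th) (act (c n) q) (act (c n') th)).
      pose proof (dist_triangle opT d Hd (act (c n) q) p (act (c n') th)).
      pose proof (dist_triangle opT d Hd p (act (c n') q) (act (c n') th)).
      rewrite (dist_sym opT d Hd p), (dist_sym opT d Hd (act (c n') q)) in *. lra. }
    destruct (choice _ Hlim) as [xi Hxi]. exists B, xi. auto.
Qed.

Lemma limit_injective (c : nat -> G) (B : nat -> Prop) (xi : T -> T) : unbounded B ->
  (forall th, converges_along d B (fun n => act (c n) th) (xi th)) -> Injective xi.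
Proof.
  intros HB Hxi th1 th2 Hx. apply (proj1 Hd). apply Rle_antisym; [|apply (dist_nonneg opT d Hd)].
  apply Rnot_lt_le. intro Hpos.
  destruct (equicontinuous_uniform (xi th1) (d th1 th2 / 2)) as [del [Hdel Hequi]]; [lra|].
  destruct (Hxi th1 del Hdel) as [M1 HM1]. destruct (Hxi th2 del Hdel) as [M2 HM2].
  destruct (HB (Nat.max M1 M2)) as [n [Hn Bn]].
  specialize (HM1 n Bn ltac:(lia)). specialize (HM2 n Bn ltac:(lia)). simpl in *.
  rewrite (dist_sym opT d Hd) in HM1, HM2. rewrite <- Hx in HM2.
  pose proof (Hequi _ (inv (c n)) HM1) as H1. pose proof (Hequi _ (inv (c n)) HM2) as H2.
  rewrite act_inv_l in H1, H2.
  pose proof (dist_triangle opT d Hd th1 (act (inv (c n)) (xi th1)) th2).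
  rewrite (dist_sym opT d Hd th1 (act (inv (c n)) (xi th1))) in H. lra.
Qed.

End Action.

Lemma pi_open_true {I Y : Type} (opY : (Y -> Prop) -> Prop) : pi_open opY (fun _ : I -> Y => True).
Proof. intros x _. exists []. split; auto. Qed.

Lemma pi_open_and {I Y : Type} (opY : (Y -> Prop) -> Prop) (O1 O2 : (I -> Y) -> Prop) :
  pi_open opY O1 -> pi_open opY O2 -> pi_open opY (fun x => O1 x /\ O2 x).
Proof.
  intros H1 H2 x [O1x O2x]. destruct (H1 x O1x) as [l1 [Hl1 Hl1O]]. destruct (H2 x O2x) as [l2 [Hl2 Hl2O]].
  exists (l1 ++ l2). split; [apply Forall_app; auto|].
  intros y Hy. apply Forall_app in Hy as [Hy1 Hy2]. auto.
Qed.

Lemma pi_open_cylinder {I Y : Type} (opY : (Y -> Prop) -> Prop) (i : I) V :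
  opY V -> pi_open opY (fun x : I -> Y => V (x i)).
Proof. intros HV x Vx. exists [(i, V)]. split; [constructor; auto|]. intros y Hy. inversion Hy; auto. Qed.

Lemma pi_open_shift {G Y : Type} (opY : (Y -> Prop) -> Prop) (mul : G -> G -> G) a O :
  pi_open opY O -> pi_open opY (fun x => O (shift mul a x)).
Proof.
  intros HO x Ox. destruct (HO _ Ox) as [l [Hl HlO]].
  exists (map (fun p => (mul (fst p) a, snd p)) l). split.
  - apply Forall_map. eapply Forall_impl; [|exact Hl]. intros [g V]. simpl. auto.
  - intros y Hy. apply HlO. apply Forall_map in Hy. eapply Forall_impl; [|exact Hy]. intros [g V]. simpl. auto.
Qed.

Lemma Xf_shift {G K : Type} (opK : (K -> Prop) -> Prop) (mul : G -> G -> G) (f : G -> K) :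
  (forall a b c, mul a (mul b c) = mul (mul a b) c) ->
  forall a y, Xf opK mul f y -> Xf opK mul f (shift mul a y).
Proof.
  intros Hassoc a y Hy O HO Oy.
  destruct (Hy _ (pi_open_shift opK mul a O HO) Oy) as [z [Oz [h ->]]].
  exists (shift mul a (shift mul h f)). split; [exact Oz|]. exists (mul a h).
  apply functional_extensionality. intro g. unfold shift. rewrite Hassoc. reflexivity.
Qed.

Definition lies_over {G T K : Type} (opT : (T -> Prop) -> Prop) (opK : (K -> Prop) -> Prop)
  (act : G -> T -> T) (th0 : T) (f : G -> K) (y : G -> K) (th : T) : Prop :=
  (forall g, Fgraph opT opK act th0 f (act g th) (y g)) /\
  (forall g g' U, opT U -> U th -> (forall x, U x -> act g x = act g' x) -> y g = y g').

Section BasePoint.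

Context {G T K : Type} (mul : G -> G -> G) (e : G) (act : G -> T -> T) (opG : (G -> Prop) -> Prop)
  (opT : (T -> Prop) -> Prop) (d : T -> T -> R) (opK : (K -> Prop) -> Prop) (th0 : T) (f : G -> K).
Hypotheses (Ha : is_action mul e act) (Hd : is_metric_for opT d) (HcT : compact opT)
  (Hjc : continuous (prod_open opG opT) opT (fun p => act (fst p) (snd p)))
  (HhK : hausdorff opK) (Hwd : well_defined_on_orbit act th0 f).

Lemma Xf_base_point y : Xf opK mul f y -> exists th, forall U, opT U -> U th ->
  forall O, pi_open opK O -> O y -> exists h, O (shift mul h f) /\ U (act h th0).
Proof.
  intro Hy. apply NNPP. intro Hn.
  destruct (compact_uniform_meet opT (fun O => pi_open opK O /\ O y)
              (fun U O => forall h, O (shift mul h f) -> ~ U (act h th0)) HcT) as [O [[HO Oy] Hcov]].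
  - split; [apply pi_open_true|auto].
  - intros O1 O2 [HO1 O1y] [HO2 O2y]. split; [apply pi_open_and; auto|auto].
  - intros W O1 O2 HO21 HR h O2h. apply HR, HO21, O2h.
  - intro th. apply NNPP. intro Hth. apply Hn. exists th. intros U HU Uth O HO Oy.
    apply NNPP. intro Hno. apply Hth. exists U, O. repeat split; auto.
    intros h Oh Uh. apply Hno. eauto.
  - destruct (Hy O HO Oy) as [z [Oz [h ->]]]. destruct (Hcov (act h th0)) as [U [_ [Uh RU]]].
    exact (RU h Oz Uh).
Qed.

Lemma Xf_lies_over y : Xf opK mul f y -> exists th, lies_over opT opK act th0 f y th.
Proof.
  intro Hy. destruct (Xf_base_point y Hy) as [th Hth]. exists th. split.
  - intros g W HW Wgy. destruct (HW _ Wgy) as [A [B [HA [HB [Ag [By Hrect]]]]]]. simpl in *.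
    destruct (Hth _ (act_open_preimage act opG opT d Hd Hjc g A HA) Ag _ (pi_open_cylinder opK g B HB) By)
      as [h [Bh Ah]].
    exists (act (mul g h) th0, f (mul g h)). split; [|eauto].
    apply Hrect; [rewrite (proj2 Ha); exact Ah|exact Bh].
  - intros g g' U HU Uth Hagree. apply NNPP. intro Hne.
    destruct (HhK _ _ Hne) as [B [B' [HB [HB' [Bg [Bg' Hdisj]]]]]].
    destruct (Hth U HU Uth (fun z => B (z g) /\ B' (z g'))) as [h [[Bh Bh'] Uh]];
      [apply pi_open_and; apply pi_open_cylinder; auto|auto|].
    unfold shift in Bh, Bh'. rewrite (Hwd (mul g h) (mul g' h)) in Bh.
    + exact (Hdisj _ (conj Bh Bh')).
    + rewrite !(proj2 Ha). apply Hagree, Uh.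
Qed.

End BasePoint.

Definition settles {G T : Type} (opT : (T -> Prop) -> Prop) (act : G -> T -> T) (D : T -> Prop)
  (c : nat -> G) (P : bool -> nat -> Prop) (th : T) (A : nat -> Prop) : Prop :=
  ((forall n, A n -> ~ D (act (c n) th)) /\ forall b, (forall n, A n -> P b n) \/ (forall n, A n -> ~ P b n))
  \/ (forall n n', A n -> A n' -> exists U, opT U /\ U th /\ forall x, U x -> act (c n) x = act (c n') x).

Lemma settles_reindex {G T : Type} opT (act : G -> T -> T) D c P th (A B : nat -> Prop) (s : nat -> nat) :
  settles opT act D c P th A -> (forall k, B k -> A (s k)) ->
  settles opT act D (fun k => c (s k)) (fun b k => P b (s k)) th B.
Proof.
  intros [[Hout Hdec]|Hagree] HBA; [left|right].
  - split; [intros k Bk; apply Hout, HBA, Bk|]. intro b. destruct (Hdec b) as [H|H]; [left|right]; auto.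
  - intros k k' Bk Bk'. apply Hagree; auto.
Qed.

Section Settling.

Context {G T : Type} (mul : G -> G -> G) (inv : G -> G) (e : G) (act : G -> T -> T)
  (opG : (G -> Prop) -> Prop) (opT : (T -> Prop) -> Prop) (d : T -> T -> R) (D : T -> Prop).
Hypotheses (Hg : is_group mul inv e) (Ha : is_action mul e act) (HT : is_topology opT)
  (Hd : is_metric_for opT d) (Hjc : continuous (prod_open opG opT) opT (fun p => act (fst p) (snd p)))
  (Hfin : forall th, finite_set (fun y => orbit act th y /\ D y))
  (Hlaf : forall p, D p -> locally_almost_free_at opT act p).

(* The orbit meets [D] in finitely many points, so infinitely many [c n] send [th] to one
   point [p]; then [c n (c m0)^-1] fix [p], and local almost freeness at [p] leaves finitely
   many germs for them near [p]. *)
Lemma agreeing_subset (c : nat -> G) th (A : nat -> Prop) :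
  unbounded (fun n => A n /\ D (act (c n) th)) -> exists B, (forall n, B n -> A n) /\ unbounded B /\
    forall n n', B n -> B n' -> exists U, opT U /\ U th /\ forall x, U x -> act (c n) x = act (c n') x.
Proof.
  intro HAD. destruct (Hfin th) as [l Hl].
  destruct (unbounded_pigeonhole l _ (fun n p => act (c n) th = p) HAD) as [p [_ Hp]].
  { intros n [An Dn]. exists (act (c n) th). split; [apply Hl; split; [exists (c n)|]|]; auto. }
  destruct (Hp 0%nat) as [m0 [_ [[_ Dm0] Hm0]]]. rewrite Hm0 in Dm0.
  destruct (Hlaf p Dm0) as [germs Hgerms].
  destruct (unbounded_pigeonhole germs _ (fun n g' => act g' p = p /\ exists U, opT U /\ U p /\
              forall x, U x -> act (mul (c n) (inv (c m0))) x = act g' x) Hp) as [g' [_ Hg']].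
  { intros n [_ Hn]. apply Hgerms. rewrite <- Hm0, <- (act_through mul inv e act Hg Ha). congruence. }
  exists (fun n => (A n /\ D (act (c n) th)) /\ act (c n) th = p /\ act g' p = p /\ exists U, opT U /\ U p /\
            forall x, U x -> act (mul (c n) (inv (c m0))) x = act g' x).
  split; [intros n [[An _] _]; exact An|]. split; [apply (unbounded_mono _ _ Hg'); tauto|].
  intros n n' [_ [_ [_ [U1 [HU1 [U1p HU1g]]]]]] [_ [_ [_ [U2 [HU2 [U2p HU2g]]]]]].
  exists (fun x => U1 (act (c m0) x) /\ U2 (act (c m0) x)). split; [|split].
  - apply (act_open_preimage act opG opT d Hd Hjc (c m0) (fun z => U1 z /\ U2 z)). apply HT; auto.
  - rewrite Hm0. auto.
  - intros x [U1x U2x].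
    rewrite (act_through mul inv e act Hg Ha (c n) (c m0)), (act_through mul inv e act Hg Ha (c n') (c m0)).
    rewrite HU1g, HU2g; auto.
Qed.

Lemma settling_subset (c : nat -> G) (P : bool -> nat -> Prop) th (A : nat -> Prop) :
  unbounded A -> exists B, (forall n, B n -> A n) /\ unbounded B /\ settles opT act D c P th B.
Proof.
  intro HA. destruct (unbounded_split A (fun n => D (act (c n) th)) HA) as [HD|HnD].
  - destruct (agreeing_subset c th A HD) as [B [HBA [HB Hagree]]]. exists B. split; [|split]; auto.
    right. exact Hagree.
  - destruct (unbounded_split _ (P false) HnD) as [H0|H0];
      destruct (unbounded_split _ (P true) H0) as [H1|H1];
      (eexists; split; [|split; [exact H1|left; split]]; [simpl; tauto|simpl; tauto|]);
      intros []; first [left; simpl; tauto|right; simpl; tauto].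
Qed.

(* [D] is countable and [xi] injective, so each [m] is the code of at most one [th] with
   [xi th] in [D]; settle them one after another and take a diagonal subsequence. *)
Lemma settling_subset_all (c : nat -> G) (P : T -> bool -> nat -> Prop) (xi : T -> T) (code : T -> nat) :
  Injective xi -> (forall x y, D x -> D y -> code x = code y -> x = y) ->
  forall A, unbounded A -> exists B, (forall n, B n -> A n) /\ unbounded B /\
    forall th, D (xi th) -> exists M, settles opT act D c (P th) th (fun n => B n /\ (M <= n)%nat).
Proof.
  intros Hxi Hcode A HA.
  destruct (unbounded_diagonal (fun m B => forall th, D (xi th) -> code (xi th) = m ->
              settles opT act D c (P th) th B)) with A as [B [HBA [HB HBset]]]; [| |exact HA|].
  - intros m B B' HB HB'B th Dth Hth.
    exact (settles_reindex opT act D c (P th) th B B' (fun n => n) (HB th Dth Hth) HB'B).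
  - intros m B HB. destruct (classic (exists th, D (xi th) /\ code (xi th) = m)) as [[th [Dth Hth]]|Hno].
    + destruct (settling_subset c (P th) th B HB) as [B' [HB'B [HB' Hset]]].
      exists B'. split; [|split]; auto. intros th' Dth' Hth'.
      replace th' with th; [exact Hset|]. apply Hxi, Hcode; auto. congruence.
    + exists B. split; [|split]; auto. intros th Dth Hth. exfalso. eauto.
  - exists B. split; [|split]; auto. intros th Dth.
    destruct (HBset (code (xi th))) as [M HM]. exists M. exact (HM th Dth eq_refl).
Qed.

End Settling.

Lemma IT_pair_independent_sequence {G K : Type} (opK : (K -> Prop) -> Prop) (mul : G -> G -> G)
  (inv : G -> G) (e : G) (f : G -> K) (x0 x1 : G -> K) :
  is_group mul inv e -> is_topology opK -> compact opK -> hausdorff opK ->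
  IT_pair opK mul inv f x0 x1 -> x0 <> x1 ->
  exists (C : bool -> K -> Prop) (c : nat -> G),
    (forall b, closed_in opK (C b)) /\ (forall z, C false z -> C true z -> False) /\
    forall (s : nat -> nat), Injective s -> forall N (a : nat -> bool),
      exists y, Xf opK mul f y /\ forall k, (k <= N)%nat -> C (a k) (y (c (s k))).
Proof.
  intros Hg HK HcK HhK [_ [_ Hindep]] Hne.
  assert (Hg0 : exists g0, x0 g0 <> x1 g0).
  { apply NNPP. intro Hn. apply Hne, functional_extensionality. intro g. apply NNPP. eauto. }
  destruct Hg0 as [g0 Hg0].
  destruct (separate_closed_nbhds opK HK HcK HhK _ _ Hg0) as [V [C [HVC [V0 [V1 Hdisj]]]]].
  assert (Hnbhd : forall b x, V b (x g0) -> nbhd_in_Xf opK mul f (fun y => Xf opK mul f y /\ V b (y g0)) x).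
  { intros b x Vx. split; [intros y [Hy _]; exact Hy|]. exists (fun y => V b (y g0)).
    split; [apply pi_open_cylinder, HVC|]. split; [exact Vx|]. intros y Vy Hy. auto. }
  destruct (Hindep _ _ (Hnbhd false x0 V0) (Hnbhd true x1 V1)) as [J [HJ HJind]].
  destruct (infinite_injective_seq J HJ) as [j [HjJ Hj]].
  exists C, (fun n => mul g0 (j n)). split; [intro b; apply HVC|]. split; [exact Hdisj|].
  intros s Hs N a.
  destruct (injective_pattern (fun k => j (s k)) a) as [a' Ha']; [intros k k' H; apply Hs, Hj, H|].
  destruct (HJind (map (fun k => j (s k)) (seq 0 (S N))) a') as [y Hy].
  { intros i Hi. apply in_map_iff in Hi as [k [<- _]]. apply HjJ. }
  assert (Hyk : forall k, (k <= N)%nat -> Xf opK mul f y /\ C (a k) (y (mul g0 (j (s k))))).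
  { intros k Hk. destruct (Hy (j (s k))) as [x [Hx ->]].
    { apply in_map_iff. exists k. split; [reflexivity|]. apply in_seq. lia. }
    rewrite Ha' in Hx. assert (Hx' : Xf opK mul f x /\ V (a k) (x g0)) by (destruct (a k); exact Hx).
    destruct Hg as [Hassoc [Hid Hinv]]. split.
    - apply (Xf_shift opK mul f Hassoc), Hx'.
    - unfold shift. rewrite <- Hassoc, (proj2 (Hinv _)), (proj2 (Hid _)). apply HVC, Hx'. }
  exists y. split; [apply (Hyk 0%nat); lia|]. intros k Hk. apply Hyk, Hk.
Qed.

Definition fiber_meets {G T K : Type} (opT : (T -> Prop) -> Prop) (opK : (K -> Prop) -> Prop)
  (act : G -> T -> T) (th0 : T) (f : G -> K) (C : K -> Prop) (t : T) : Prop :=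
  exists v, Fgraph opT opK act th0 f t v /\ C v.

Section Alternating.

Context {G T K : Type} (act : G -> T -> T) (opG : (G -> Prop) -> Prop) (opT : (T -> Prop) -> Prop)
  (d : T -> T -> R) (opK : (K -> Prop) -> Prop) (th0 : T) (f : G -> K).
Hypotheses (HT : is_topology opT) (HcT : compact opT) (Hd : is_metric_for opT d)
  (Hjc : continuous (prod_open opG opT) opT (fun p => act (fst p) (snd p))) (HcK : compact opK).

Local Notation D := (Dset opT opK act th0 f).
Local Notation meets := (fiber_meets opT opK act th0 f).

Variables (C : bool -> K -> Prop) (c : nat -> G) (xi : T -> T).
Hypotheses (HC : forall b, closed_in opK (C b)) (Hdisj : forall z, C false z -> C true z -> False)
  (Hlim : forall th, converges_along d (fun _ => True) (fun n => act (c n) th) (xi th))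
  (Hsettle : forall th, D (xi th) -> exists M,
     settles opT act D c (fun b n => meets (C b) (act (c n) th)) th (fun n => (M <= n)%nat))
  (Hindep : forall N, exists y th, lies_over opT opK act th0 f y th /\
     forall k, (k <= N)%nat -> C (Nat.even k) (y (c k))).

Lemma C_negb_disjoint b z : C b z -> C (negb b) z -> False.
Proof. destruct b; simpl; intros; apply (Hdisj z); auto. Qed.

Lemma meets_both_Dset t b : meets (C b) t -> meets (C (negb b)) t -> D t.
Proof.
  intros [v [Fv Cv]] [v' [Fv' Cv']]. exists v, v'. split; [exact Fv|]. split; [exact Fv'|].
  intros <-. exact (C_negb_disjoint b v Cv Cv').
Qed.

Lemma alternating_cluster : exists ths, forall U, opT U -> U ths -> forall N, exists y th,
  U th /\ lies_over opT opK act th0 f y th /\ forall k, (k <= N)%nat -> C (Nat.even k) (y (c k)).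
Proof.
  destruct (choice (fun N (p : (G -> K) * T) => lies_over opT opK act th0 f (fst p) (snd p) /\
              forall k, (k <= N)%nat -> C (Nat.even k) (fst p (c k)))) as [yth Hyth].
  { intro N. destruct (Hindep N) as [y [th H]]. exists (y, th). exact H. }
  destruct (compact_cluster_point opT HcT (fun _ => True) (fun N => snd (yth N))) as [ths Hths];
    [intro M; exists M; auto|].
  exists ths. intros U HU Uths N. destruct (Hths U HU Uths N) as [N' [HN' [_ UN']]].
  exists (fst (yth N')), (snd (yth N')). split; [exact UN'|]. split; [apply Hyth|].
  intros k Hk. apply Hyth. lia.
Qed.

Section ClusterPoint.

Variable ths : T.
Hypothesis Hths : forall U, opT U -> U ths -> forall N, exists y th,
  U th /\ lies_over opT opK act th0 f y th /\ forall k, (k <= N)%nat -> C (Nat.even k) (y (c k)).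

Lemma alternating_fiber_meets k : meets (C (Nat.even k)) (act (c k) ths).
Proof.
  destruct (closure_fiber_limit opT opK (fun p => exists g, p = (act g th0, f g)) HT HcK
              (C (Nat.even k)) (HC _) (act (c k) ths)) as [v [Cv Fv]].
  - intros A HA Ak.
    destruct (Hths _ (act_open_preimage act opG opT d Hd Hjc (c k) A HA) Ak k) as [y [th [Ath [Hy HyC]]]].
    exists (act (c k) th), (y (c k)). split; [exact Ath|]. split; [apply Hy|apply HyC; lia].
  - exists v. split; assumption.
Qed.

Lemma limit_outside_Dset : ~ D (xi ths) -> False.
Proof.
  intro nD.
  assert (Hb : exists b, ~ meets (C b) (xi ths)).
  { apply NNPP. intro Hn. apply nD, (meets_both_Dset _ false); apply NNPP; intro; apply Hn; eauto. }
  destruct Hb as [b Hb]. apply Hb.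
  destruct (closure_fiber_limit opT opK (fun p => exists g, p = (act g th0, f g)) HT HcK
              (C b) (HC b) (xi ths)) as [v [Cv Fv]]; [|exists v; split; assumption].
  intros A HA Ap. destruct (converges_along_open opT d Hd _ _ _ A (Hlim ths) HA Ap) as [M HM].
  destruct (even_exists_ge b M) as [k [Hk Hkb]]. destruct (alternating_fiber_meets k) as [v [Fv Cv]].
  exists (act (c k) ths), v. split; [apply HM; auto|]. rewrite Hkb in Cv. split; assumption.
Qed.

Lemma limit_in_Dset : D (xi ths) -> False.
Proof.
  intro Dx. destruct (Hsettle ths Dx) as [M [[Hout Hdec]|Hagree]].
  - pose proof (alternating_fiber_meets M) as HmM. pose proof (alternating_fiber_meets (S M)) as HmSM.
    rewrite Nat.even_succ, <- Nat.negb_even in HmSM.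
    destruct (Hdec (Nat.even M)) as [Hall|Hnone].
    + apply (Hout (S M)); [lia|]. exact (meets_both_Dset _ _ (Hall (S M) ltac:(lia)) HmSM).
    + exact (Hnone M (le_n M) HmM).
  - destruct (Hagree M (S M) (le_n M) ltac:(lia)) as [U [HU [Uths HUagree]]].
    destruct (Hths U HU Uths (S M)) as [y [th [Uth [[_ Hloc] HyC]]]].
    pose proof (HyC M ltac:(lia)) as HM. pose proof (HyC (S M) (le_n _)) as HSM.
    rewrite Nat.even_succ, <- Nat.negb_even, <- (Hloc (c M) (c (S M)) U HU Uth HUagree) in HSM.
    exact (C_negb_disjoint _ _ HM HSM).
Qed.

End ClusterPoint.

Lemma alternating_absurd : False.
Proof.
  destruct alternating_cluster as [ths Hths].
  destruct (classic (D (xi ths))) as [Dx|nDx];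
    [exact (limit_in_Dset ths Hths Dx)|exact (limit_outside_Dset ths Hths nDx)].
Qed.

End Alternating.

Theorem mainTheorem10 (G T K : Type)
  (opG : (G -> Prop) -> Prop) (mul : G -> G -> G) (inv : G -> G) (e : G)
  (opT : (T -> Prop) -> Prop) (act : G -> T -> T)
  (opK : (K -> Prop) -> Prop) (th0 : T) (f : G -> K)
  (Hset : semicocycle_setting opG mul inv e opT act opK th0 f)
  (Hmet : metrizable opT)
  (Hcount : countable_set (Dset opT opK act th0 f))
  (Hfin : forall th, finite_set (fun y => orbit act th y /\ Dset opT opK act th0 f y))
  (Hlaf : forall th, Dset opT opK act th0 f th -> locally_almost_free_at opT act th) :
  tame_Xf opK mul inv f.
Proof.
  destruct Hset as [[_ [Hgrp _]] [HT [HcT [_ [Hact [Hjc [_ [Heq [HK [HcK [HhK [Hwd _]]]]]]]]]]]].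
  destruct Hmet as [d Hd]. destruct Hcount as [code Hcode].
  intros x0 x1 Hit. apply NNPP. intro Hne.
  destruct (IT_pair_independent_sequence opK mul inv e f x0 x1 Hgrp HK HcK HhK Hit Hne)
    as [C [c [HC [Hdisj Hindep]]]].
  destruct (pointwise_convergent_subset act opT d Hd HcT Heq c (fun _ => True))
    as [B0 [xi [_ [HB0 Hxi]]]]; [intro M; exists M; auto|].
  destruct (settling_subset_all mul inv e act opG opT d _ Hgrp Hact HT Hd Hjc Hfin Hlaf c
              (fun th b n => fiber_meets opT opK act th0 f (C b) (act (c n) th)) xi code
              (limit_injective mul inv e act Hgrp Hact opT d Hd Heq c B0 xi HB0 Hxi) Hcode B0 HB0)
    as [B [HBB0 [HB Hsettle]]].
  destruct (unbounded_enum B HB) as [s [Hs HsB]].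
  apply (alternating_absurd act opG opT d opK th0 f HT HcT Hd Hjc HcK C (fun k => c (s k)) xi HC Hdisj).
  - intro th. exact (converges_along_reindex d B s (fun n => act (c n) th) (xi th) Hs HsB
                       (converges_along_mono d _ _ _ _ (Hxi th) HBB0)).
  - intros th Dth. destruct (Hsettle th Dth) as [M HM]. exists M.
    apply (settles_reindex opT act _ c _ th _ _ s HM). intros k Hk.
    split; [apply HsB|]. pose proof (increasing_ge s Hs k). lia.
  - intro N. destruct (Hindep s (increasing_injective s Hs) N Nat.even) as [y [Hy HyC]].
    destruct (Xf_lies_over mul e act opG opT d opK th0 f Hact Hd HcT Hjc HhK Hwd y Hy) as [th Hth].
    exists y, th. split; assumption.
Qed.
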